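(* Fix $k\ge0$ and let $\Lambda$ be a locally convex $(k+1)$-graph with $\Gamma=d^{-1}(\mathbb N^k\times\{0\})$. If $v\in\Lambda^0$ and $F\subseteq v\Gamma$ is a finite set that is exhaustive in $\Gamma$, then $F$ is exhaustive in $\Lambda$.
   Context: A $(k+1)$-graph is a countable small category $\Lambda$ with a functor $d:\Lambda\to\mathbb N^{k+1}$ such that whenever $d(\lambda)=m+n$ there are unique $\mu,\nu$ with $\lambda=\mu\nu$, $d(\mu)=m$, $d(\nu)=n$; $\Lambda^n=d^{-1}(n)$, $e_i$ the standard basis vectors. $\Lambda$ is locally convex if for $i\ne j$, whenever $e\in\Lambda^{e_i}$ and $r(e)\Lambda^{e_j}\ne\emptyset$, we have $s(e)\Lambda^{e_j}\ne\emptyset$. $\Gamma$ is a $k$-graph (subcategory). For a category $\mathcal C$ and $v\in\mathcal C^0$, $F\subseteq v\mathcal C$ is exhaustive in $\mathcal C$ if for every $c\in v\mathcal C$ there is $a\in F$ with $c\mathcal C\cap a\mathcal C\ne\emptyset$. *)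

From mathcomp Require Import all_boot.
Set Implicit Arguments. Unset Strict Implicit. Unset Printing Implicit Defensive.

(* A small category with a degree functor into N^n (N^n represented as
   functions 'I_n -> nat, compared pointwise). *)
Record degcat (n : nat) := DegCat {
  Obj : countType;
  Mor : countType;
  src : Mor -> Obj;
  rng : Mor -> Obj;
  idm : Obj -> Mor;
  comp : Mor -> Mor -> Mor;
  deg : Mor -> 'I_n -> nat;
  src_idm : forall v, src (idm v) = v;
  rng_idm : forall v, rng (idm v) = v;
  src_comp : forall mu nu, src mu = rng nu -> src (comp mu nu) = src nu;
  rng_comp : forall mu nu, src mu = rng nu -> rng (comp mu nu) = rng mu;
  comp_idl : forall mu, comp (idm (rng mu)) mu = mu;
  comp_idr : forall mu, comp mu (idm (src mu)) = mu;
  compA : forall l mu nu, src l = rng mu -> src mu = rng nu ->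
            comp l (comp mu nu) = comp (comp l mu) nu;
  deg_idm : forall v i, deg (idm v) i = 0;
  deg_comp : forall mu nu, src mu = rng nu ->
            forall i, deg (comp mu nu) i = deg mu i + deg nu i
}.

Definition is_kgraph (n : nat) (L : degcat n) : Prop :=
  forall (lam : Mor L) (m p : 'I_n -> nat),
    (forall i, deg lam i = m i + p i) ->
    (exists mu nu, src mu = rng nu /\ lam = comp mu nu /\
        (forall i, deg mu i = m i) /\ (forall i, deg nu i = p i)) /\
    (forall mu nu mu' nu',
        src mu = rng nu -> lam = comp mu nu ->
        (forall i, deg mu i = m i) -> (forall i, deg nu i = p i) ->
        src mu' = rng nu' -> lam = comp mu' nu' ->
        (forall i, deg mu' i = m i) -> (forall i, deg nu' i = p i) ->
        mu = mu' /\ nu = nu').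

Definition basis (n : nat) (i : 'I_n) : 'I_n -> nat :=
  fun j => if j == i then 1 else 0.

Definition has_degree (n : nat) (L : degcat n) (lam : Mor L) (m : 'I_n -> nat) :=
  forall j, deg lam j = m j.

Definition locally_convex (n : nat) (L : degcat n) : Prop :=
  forall (i j : 'I_n), i != j ->
  forall e : Mor L, has_degree e (basis i) ->
    (exists f : Mor L, rng f = rng e /\ has_degree f (basis j)) ->
    (exists g : Mor L, rng g = src e /\ has_degree g (basis j)).

Definition inGamma (k : nat) (L : degcat k.+1) (lam : Mor L) : Prop :=
  deg lam ord_max = 0.

Definition exhaustive_in (n : nat) (L : degcat n) (inC : Mor L -> Prop)
    (v : Obj L) (F : seq (Mor L)) : Prop :=
  forall c : Mor L, inC c -> rng c = v ->
    exists2 a, a \in F &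
      exists g1 g2 : Mor L, inC g1 /\ inC g2 /\
        src c = rng g1 /\ src a = rng g2 /\ comp c g1 = comp a g2.

(* Given a path c ending at v, first push its last-colour part to the front,
   c = nu0 mu0 with mu0 in Gamma, and extend mu0 inside Gamma by eta until no
   further edge of a Gamma colour i can be appended unless the i-degree has
   reached a bound M_i that dominates every degree in F.  Re-factorising
   nu0 mu0 eta = b nu with b in Gamma, local convexity carries this saturation
   backwards along the last-colour path nu, from its source to the source of b.
   Exhaustiveness in Gamma yields a in F with b Gamma meeting a Gamma, and
   saturation forces d(a) <= d(b), so a is a prefix of b by unique
   factorisation; hence c eta lies in a Lambda. *)
From mathcomp Require Import all_boot zify.
From Stdlib Require Import Classical.
Set Implicit Arguments. Unset Strict Implicit. Unset Printing Implicit Defensive.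

Section KGraph.

Variables (n : nat) (L : degcat n).
Hypothesis HL : is_kgraph L.

Lemma kgraph_factor (lam : Mor L) (m p : 'I_n -> nat) :
  (forall i, deg lam i = m i + p i) ->
  exists mu nu, src mu = rng nu /\ lam = comp mu nu /\
    has_degree mu m /\ has_degree nu p.
Proof. by move=> hd; have [[mu [nu fact]] _] := HL hd; exists mu, nu. Qed.

Lemma kgraph_factor_uniq (mu nu mu' nu' : Mor L) :
  src mu = rng nu -> src mu' = rng nu' -> comp mu nu = comp mu' nu' ->
  deg mu =1 deg mu' -> mu = mu' /\ nu = nu'.
Proof.
move=> hs hs' he hd.
have hd' : deg nu =1 deg nu'.
  by move=> i; apply/eqP; rewrite -(eqn_add2l (deg mu i)) -deg_comp // he deg_comp // hd.
have [_ uniq] := HL (deg_comp hs).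
by apply: (uniq mu nu mu' nu') => // i; rewrite ?hd ?hd'.
Qed.

Lemma deg0_idm (nu : Mor L) : (forall i, deg nu i = 0) -> nu = idm (rng nu).
Proof.
move=> h0.
have hs : src (idm (rng nu)) = rng nu by rewrite src_idm.
have he : comp nu (idm (src nu)) = comp (idm (rng nu)) nu by rewrite comp_idl comp_idr.
by have [] := kgraph_factor_uniq (esym (rng_idm _)) hs he (fun i => ltac:(by rewrite h0 deg_idm)).
Qed.

Lemma edge_of_deg_pos (g : Mor L) (i : 'I_n) :
  0 < deg g i -> exists e, rng e = rng g /\ has_degree e (basis i).
Proof.
move=> hpos.
have hd : forall j, deg g j = basis i j + (deg g j - basis i j).
  by move=> j; rewrite /basis; case: eqP => [->|_]; lia.
have [e [r [hs [-> [he _]]]]] := kgraph_factor hd.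
by exists e; rewrite rng_comp.
Qed.

Lemma factor_through_prefix (a b g1 g2 : Mor L) :
  src b = rng g1 -> src a = rng g2 -> comp b g1 = comp a g2 ->
  (forall i, deg a i <= deg b i) ->
  exists r, src a = rng r /\ src r = rng g1 /\ b = comp a r.
Proof.
move=> hs1 hs2 he hle.
have hd : forall i, deg b i = deg a i + (deg b i - deg a i) by move=> i; rewrite subnKC.
have [a' [r [hs [hb [ha' _]]]]] := kgraph_factor hd.
have hsr : src r = rng g1 by rewrite -hs1 hb src_comp.
have [ea _] : a' = a /\ comp r g1 = g2.
  apply: kgraph_factor_uniq => //; first by rewrite rng_comp.
  by rewrite compA // -hb.
by exists r; rewrite -ea.
Qed.

Hypothesis HLC : locally_convex L.

Lemma locally_convex_transport (i j : 'I_n) (m : nat) (nu : Mor L) :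
  i != j -> has_degree nu (fun l => if l == j then m else 0) ->
  (exists f, rng f = rng nu /\ has_degree f (basis i)) ->
  exists g, rng g = src nu /\ has_degree g (basis i).
Proof.
move=> hij; elim: m nu => [|m IH] nu hd hf.
  by rewrite (@deg0_idm nu (fun l => ltac:(by rewrite (hd l); case: ifP))) src_idm.
have hd' : forall l, deg nu l = basis j l + (if l == j then m else 0).
  by move=> l; rewrite hd /basis; case: ifP.
have [e [nu' [hs [hnu [he hnu']]]]] := kgraph_factor hd'; subst nu.
rewrite src_comp //; apply: IH => //.
have [f [hrf hdf]] := hf.
have [g [hrg hdg]] : exists g, rng g = src e /\ has_degree g (basis i).
  by apply: (HLC _ he); [rewrite eq_sym | exists f; rewrite hrf rng_comp].
by exists g; rewrite hrg.
Qed.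

End KGraph.

Section Gamma.

Variables (k : nat) (L : degcat k.+1).

Definition saturated_at (M d : 'I_k.+1 -> nat) (w : Obj L) :=
  forall i, i != ord_max -> d i < M i ->
  forall e : Mor L, rng e = w -> ~ has_degree e (basis i).

Variable M : 'I_k.+1 -> nat.

Lemma saturate (g : Mor L) : (forall i, deg g i <= M i) ->
  exists eta, rng eta = src g /\ inGamma eta /\
    (forall i, deg (comp g eta) i <= M i) /\
    saturated_at M (deg (comp g eta)) (src eta).
Proof.
move: {2}(\sum_i (M i - deg g i)) (leqnn (\sum_i (M i - deg g i))) => N.
elim: N g => [|N IH] g hN hle.
all: case: (classic (exists i (e : Mor L), [/\ i != ord_max, deg g i < M i,
                                         rng e = src g & has_degree e (basis i)]))
       => [[i [e [hi hlt hre hde]]] | hsat]; last first.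
all: try by exists (idm (src g)); rewrite rng_idm /inGamma deg_idm comp_idr src_idm;
  do 3!split=> //; move=> i hi hlt e he hde; apply: hsat; exists i, e.
- by move: hN; rewrite (bigD1 i) //=; lia.
- have hs : src g = rng e by [].
  have hdge : forall j, deg (comp g e) j = deg g j + basis i j.
    by move=> j; rewrite deg_comp // hde.
  have hdec : \sum_j (M j - deg (comp g e) j) <= N.
    rewrite -ltnS; apply: leq_trans hN.
    rewrite (bigD1 i) //= [X in _ < X](bigD1 i) //= hdge /basis eqxx.
    rewrite (eq_bigr (fun j => M j - deg g j)); first lia.
    by move=> j /negbTE hj; rewrite hdge /basis hj addn0.
  have hle' : forall j, deg (comp g e) j <= M j.
    by move=> j; rewrite hdge /basis; case: ifP => [/eqP ->|_]; [lia | rewrite addn0].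
  have [eta [hr [hG [hb hsat]]]] := IH _ hdec hle'.
  have hse : src e = rng eta by rewrite hr src_comp.
  exists (comp e eta); rewrite rng_comp // src_comp // compA //.
  rewrite /inGamma deg_comp // hG hde /basis eq_sym (negbTE hi).
  by do !split.
Qed.

Hypothesis HL : is_kgraph L.

Lemma saturated_prefix_le (a b g1 g2 : Mor L) :
  inGamma a -> (forall i, deg a i <= M i) -> saturated_at M (deg b) (src b) ->
  src b = rng g1 -> src a = rng g2 -> comp b g1 = comp a g2 ->
  forall i, deg a i <= deg b i.
Proof.
move=> aG haM hsat hs1 hs2 he i.
have [-> | hi] := eqVneq i ord_max; first by rewrite (aG : deg a ord_max = 0).
rewrite leqNgt; apply/negP => hlt.
have hg1 : 0 < deg g1 i.
  by have := congr1 (fun x => deg x i) he; rewrite /= !deg_comp //; lia.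
have [e [hre hde]] := edge_of_deg_pos HL hg1.
exact: (hsat i hi (leq_trans hlt (haM i)) e (etrans hre (esym hs1)) hde).
Qed.

Hypothesis HLC : locally_convex L.

Lemma saturated_at_rng (d : 'I_k.+1 -> nat) (m : nat) (nu : Mor L) :
  has_degree nu (fun l => if l == ord_max then m else 0) ->
  saturated_at M d (src nu) -> saturated_at M d (rng nu).
Proof.
move=> hnu hsat i hi hlt e hre hde.
have [g [hrg hdg]] := locally_convex_transport HL HLC hi hnu (ex_intro _ e (conj hre hde)).
exact: (hsat i hi hlt g hrg hdg).
Qed.

Lemma gamma_saturated_extension (c : Mor L) :
  (forall i, i != ord_max -> deg c i <= M i) ->
  exists eta b nu, [/\ inGamma eta /\ rng eta = src c, inGamma b /\ rng b = rng c,
    src b = rng nu, comp c eta = comp b nu & saturated_at M (deg b) (src b)].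
Proof.
move=> hcM.
have hsplit : forall j, deg c j = (if j == ord_max then deg c ord_max else 0) +
                                  (if j == ord_max then 0 else deg c j).
  by move=> j; case: ifP => [/eqP ->|_]; rewrite ?addn0.
have [nu0 [mu0 [hs0 [hc [hnu0 hmu0]]]]] := kgraph_factor HL hsplit.
have hmuM : forall i, deg mu0 i <= M i.
  by move=> i; rewrite hmu0; case: ifP => // /negbT; exact: hcM.
have [eta [hreta [etaG [_ hsat]]]] := saturate hmuM.
have hs1 : src mu0 = rng eta by [].
have hs2 : src nu0 = rng (comp mu0 eta) by rewrite rng_comp.
have hswap : forall j, deg (comp nu0 (comp mu0 eta)) j =
                       deg (comp mu0 eta) j + deg nu0 j.
  by move=> j; rewrite deg_comp // addnC.
have [b [nu [hsb [he [hdb hdnu]]]]] := kgraph_factor HL hswap.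
have hsnu : src nu = src eta by rewrite -(src_comp hsb) -he !src_comp.
have hsat' : saturated_at M (deg b) (src nu).
  by move=> i hi; rewrite hdb hsnu; exact: hsat.
exists eta, b, nu; split=> //.
- by split=> //; rewrite hc src_comp.
- split; first by rewrite /inGamma hdb deg_comp // etaG hmu0 eqxx.
  by rewrite -(rng_comp hsb) -he !rng_comp // hc rng_comp.
- by rewrite hc -compA.
- by rewrite hsb; apply: (saturated_at_rng (fun j => etrans (hdnu j) (hnu0 j))).
Qed.

End Gamma.

Theorem lemma3p17 (k : nat) (L : degcat k.+1) :
  is_kgraph L -> locally_convex L ->
  forall (v : Obj L) (F : seq (Mor L)),
    (forall a, a \in F -> rng a = v /\ inGamma a) ->
    exhaustive_in (@inGamma k L) v F ->
    exhaustive_in (fun _ : Mor L => True) v F.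
Proof.
move=> HL HLC v F hF hex c _ hcv.
pose M i := deg c i + \max_(a <- F) deg a i.
have [eta [b [nu [[etaG hreta] [bG hrb] hsb hc hsat]]]] :=
  gamma_saturated_extension HL HLC (M := M) (fun i _ => leq_addr _ _).
have [a aF [g1 [g2 [_ [_ [hs1 [hs2 hbg]]]]]]] := hex b bG (etrans hrb hcv).
have haM : forall i, deg a i <= M i.
  by move=> i; apply: leq_trans (leq_addl _ _); exact: leq_bigmax_seq.
have hle := saturated_prefix_le HL (proj2 (hF a aF)) haM hsat hs1 hs2 hbg.
have [r [hsa [hsr hba]]] := factor_through_prefix HL hs1 hs2 hbg hle.
have hsrnu : src r = rng nu by rewrite hsr -hs1.
exists a => //; exists eta, (comp r nu); do !split => //.
- by rewrite rng_comp.
- by rewrite hc hba -compA.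
Qed.
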